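(* Let $f:\mathbb{R}^n\to\mathbb{R}$ be $\mathcal C^2$, $\mu$-strongly convex, with $L$-Lipschitz gradient and $\eta$-Lipschitz Hessian $\nabla^2 f$ (in operator norm). Let $k\ge1$, $C\ge1$, $x_0\in\mathbb{R}^n$, and $x_{i+1}=x_i-\frac1L\nabla f(x_i)$ for $i=0,\dots,k-1$. Define $\xi(x)=\frac1L\big(\nabla^2f(x_0)x-\nabla f(x)\big)$. Then $\xi$ is $\frac{\eta}{L^2}kC\|\nabla f(x_0)\|$-Lipschitz on the set $B_C=\{\sum_{i=0}^kc_ix_i : c\in\mathbb{R}^{k+1},\ \mathbf 1^Tc=1,\ \|c\|_1\le C\}$.
   Context: $\|\cdot\|$ is the Euclidean norm (operator norm for matrices), and $\|c\|_1=\sum_i|c_i|$. *)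

From HB Require Import structures.
From mathcomp Require Import all_boot all_order all_algebra.
From mathcomp Require Import all_classical all_reals all_analysis.
Set Implicit Arguments. Unset Strict Implicit. Unset Printing Implicit Defensive.
Import Order.TTheory GRing.Theory Num.Theory.
Import numFieldNormedType.Exports.
Local Open Scope classical_set_scope.
Local Open Scope ring_scope.

Definition enorm (R : realType) (n : nat) (v : 'rV[R]_n) : R :=
  Num.sqrt (\sum_(i < n) v ord0 i ^+ 2).

(* Operator norm (w.r.t. the Euclidean norm) of A acting on column vectors
   x |-> A x; written with rows: (A x)^T = x^T A^T. *)
Definition opnorm (R : realType) (n : nat) (A : 'M[R]_n) : R :=
  sup [set r | exists v : 'rV[R]_n, enorm v <= 1 /\ r = enorm (v *m A^T)].

Definition dotp (R : realType) (n : nat) (u v : 'rV[R]_n) : R :=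
  \sum_(i < n) u ord0 i * v ord0 i.

Definition is_gradient (R : realType) (n : nat)
  (f : 'rV[R]_n -> R) (g : 'rV[R]_n -> 'rV[R]_n) : Prop :=
  forall x, differentiable f x /\ forall v, 'd f x v = dotp (g x) v.

(* H is the Hessian of f, i.e. the derivative of the gradient g:
   dg(x)[v] = H(x) v  (as a column), i.e. v *m H(x)^T as a row. *)
Definition is_hessian (R : realType) (n : nat)
  (g : 'rV[R]_n -> 'rV[R]_n) (H : 'rV[R]_n -> 'M[R]_n) : Prop :=
  forall x, differentiable g x /\ forall v, 'd g x v = v *m (H x)^T.

Definition strongly_convex (R : realType) (n : nat) (mu : R)
  (f : 'rV[R]_n -> R) : Prop :=
  0 < mu /\
  forall (x y : 'rV[R]_n) (t : R), 0 <= t -> t <= 1 ->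
    f (t *: x + (1 - t) *: y) <=
      t * f x + (1 - t) * f y - mu / 2 * t * (1 - t) * enorm (x - y) ^+ 2.

Definition xi (R : realType) (n : nat) (L : R) (g : 'rV[R]_n -> 'rV[R]_n)
  (H0 : 'M[R]_n) (x : 'rV[R]_n) : 'rV[R]_n :=
  L^-1 *: (x *m H0^T - g x).

Definition BC (R : realType) (n k : nat) (C : R) (xs : nat -> 'rV[R]_n)
  : set 'rV[R]_n :=
  [set y | exists c : 'rV[R]_k.+1,
     \sum_(i < k.+1) c ord0 i = 1 /\
     \sum_(i < k.+1) `|c ord0 i| <= C /\
     y = \sum_(i < k.+1) c ord0 i *: xs i].

(* Write D := xi(y) - xi(z) and d := y - z. Pairing with D the mean value theorem for
   the gradient along [z, y] gives a point w of that segment with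
   L |D|^2 = <D, (H(x0) - H(w)) d> <= |D| eta |w - x0| |d|.
   It remains to bound |w - x0|. For a convex function with L-Lipschitz gradient the
   gradient is co-coercive, hence a gradient step of length 1/L does not increase
   |grad f|; so |x_i - x0| <= (i/L) |grad f(x0)|, an affine combination with
   ||c||_1 <= C stays within C k/L |grad f(x0)| of x0, and so does the segment [z, y].
   Strong convexity enters only through convexity. *)

From HB Require Import structures.
From mathcomp Require Import all_boot all_order all_algebra.
From mathcomp Require Import all_classical all_reals all_analysis.
From mathcomp Require Import ring lra.
Import Order.TTheory GRing.Theory Num.Theory.
Import numFieldNormedType.Exports.
Local Open Scope classical_set_scope.
Local Open Scope ring_scope.
Set Implicit Arguments. Unset Strict Implicit. Unset Printing Implicit Defensive.

Section Euclidean.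
Variables (R : realType) (n : nat).
Implicit Types (u v w : 'rV[R]_n) (a : R).

Lemma dotpC u v : dotp u v = dotp v u.
Proof. by apply: eq_bigr => i _; rewrite mulrC. Qed.

Lemma dotpDr u v w : dotp u (v + w) = dotp u v + dotp u w.
Proof. by rewrite /dotp -big_split; apply: eq_bigr => i _; rewrite mxE mulrDr. Qed.

Lemma dotpZr u a v : dotp u (a *: v) = a * dotp u v.
Proof. by rewrite /dotp mulr_sumr; apply: eq_bigr => i _; rewrite mxE mulrCA. Qed.

Lemma dotpNr u v : dotp u (- v) = - dotp u v.
Proof. by rewrite -scaleN1r dotpZr mulN1r. Qed.

Lemma dotpBr u v w : dotp u (v - w) = dotp u v - dotp u w.
Proof. by rewrite dotpDr dotpNr. Qed.

Lemma dotpZl u a v : dotp (a *: v) u = a * dotp v u.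
Proof. by rewrite dotpC dotpZr dotpC. Qed.

Lemma dotpNl u v : dotp (- v) u = - dotp v u.
Proof. by rewrite dotpC dotpNr dotpC. Qed.

Lemma dotpBl u v w : dotp (v - w) u = dotp v u - dotp w u.
Proof. by rewrite dotpC dotpBr !(dotpC u). Qed.

Lemma dotp0l v : dotp 0 v = 0.
Proof. by rewrite /dotp big1 // => i _; rewrite mxE mul0r. Qed.

Lemma dotp0r v : dotp v 0 = 0.
Proof. by rewrite dotpC dotp0l. Qed.

Lemma enorm_ge0 v : 0 <= enorm v.
Proof. exact: sqrtr_ge0. Qed.

Lemma enorm_sq v : enorm v ^+ 2 = dotp v v.
Proof.
rewrite /enorm sqr_sqrtr; first by apply: eq_bigr => i _; rewrite expr2.
by apply: sumr_ge0 => i _; rewrite sqr_ge0.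
Qed.

Lemma enorm_eq0 v : (enorm v == 0) = (v == 0).
Proof.
apply/idP/eqP => [|->]; last by rewrite -sqrf_eq0 enorm_sq dotp0l.
rewrite -sqrf_eq0 enorm_sq psumr_eq0 => [/allP v0|i _]; last by rewrite -expr2 sqr_ge0.
apply/matrixP => i j; rewrite ord1 mxE.
by have := v0 j (mem_index_enum j); rewrite mulf_eq0 orbb => /eqP.
Qed.

Lemma enorm0 : enorm (0 : 'rV[R]_n) = 0.
Proof. by apply/eqP; rewrite enorm_eq0. Qed.

Lemma enorm_gt0 v : (0 < enorm v) = (v != 0).
Proof. by rewrite lt_def enorm_eq0 enorm_ge0 andbT. Qed.

Lemma enormZ a v : enorm (a *: v) = `|a| * enorm v.
Proof.
rewrite /enorm -sqrtr_sqr -sqrtrM ?sqr_ge0 // mulr_sumr.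
by congr Num.sqrt; apply: eq_bigr => i _; rewrite mxE exprMn.
Qed.

Lemma enormN v : enorm (- v) = enorm v.
Proof. by rewrite -scaleN1r enormZ normrN1 mul1r. Qed.

Lemma enorm_distC u v : enorm (u - v) = enorm (v - u).
Proof. by rewrite -enormN opprB. Qed.

Lemma enormB_sq u v :
  enorm (u - v) ^+ 2 = enorm u ^+ 2 - 2 * dotp u v + enorm v ^+ 2.
Proof. by rewrite !enorm_sq dotpBl !dotpBr (dotpC v u); ring. Qed.

Lemma dotp_le_enormM u v : dotp u v <= enorm u * enorm v.
Proof.
have [->|u0] := eqVneq u 0; first by rewrite dotp0l enorm0 mul0r.
have [->|v0] := eqVneq v 0; first by rewrite dotp0r enorm0 mulr0.
set a := enorm u; set b := enorm v.
have ab_gt0 : 0 < a * b by rewrite mulr_gt0 ?enorm_gt0.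
have := sqr_ge0 (enorm (b *: u - a *: v)).
rewrite enormB_sq !enormZ dotpZl dotpZr !ger0_norm ?enorm_ge0 // -/a -/b.
nra.
Qed.

Lemma normr_dotp_le_enormM u v : `|dotp u v| <= enorm u * enorm v.
Proof.
rewrite ler_norml dotp_le_enormM andbT lerNl -dotpNl.
by rewrite -(enormN u) dotp_le_enormM.
Qed.

Lemma ler_enormD u v : enorm (u + v) <= enorm u + enorm v.
Proof.
rewrite -ler_sqr ?nnegrE ?addr_ge0 ?enorm_ge0 //.
have := enormB_sq u (- v); rewrite opprK enormN dotpNr => ->.
have := dotp_le_enormM u v; lra.
Qed.

Lemma ler_enorm_sum (I : Type) (r : seq I) (P : pred I) (F : I -> 'rV[R]_n) :
  enorm (\sum_(i <- r | P i) F i) <= \sum_(i <- r | P i) enorm (F i).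
Proof.
elim/big_rec2: _ => [|i y1 y2 _ h]; first by rewrite enorm0.
by apply: le_trans (ler_enormD _ _) _; rewrite lerD2l.
Qed.

Lemma enorm_const1_gt0 : (0 < n)%N -> 0 < enorm (const_mx 1 : 'rV[R]_n).
Proof.
move=> n_gt0; rewrite /enorm sqrtr_gt0.
under eq_bigr do rewrite mxE expr1n.
by rewrite sumr_const card_ord ltr0n.
Qed.

Lemma ge0_of_mul_enorm_ge0 (K : R) : (0 < n)%N ->
  (forall v, 0 <= K * enorm v) -> 0 <= K.
Proof.
by move=> /enorm_const1_gt0 one_gt0 /(_ (const_mx 1)); rewrite pmulr_lge0.
Qed.
End Euclidean.

Section OperatorNorm.
Variables (R : realType) (n : nat).
Implicit Types (v : 'rV[R]_n) (A : 'M[R]_n).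

Lemma enorm_mulmx_bounded A :
  exists2 M, 0 <= M & forall v, enorm (v *m A^T) <= M * enorm v.
Proof.
pose S := \sum_(j < n) enorm (row j A) ^+ 2.
have S_ge0 : 0 <= S by apply: sumr_ge0 => j _; apply: sqr_ge0.
exists (Num.sqrt S) => [|v]; first exact: sqrtr_ge0.
rewrite -ler_sqr ?nnegrE ?mulr_ge0 ?sqrtr_ge0 ?enorm_ge0 //.
rewrite exprMn enorm_sq (sqr_sqrtr S_ge0) /S mulr_suml /dotp.
apply: ler_sum => j _; rewrite -expr2 mulrC -exprMn.
have -> : (v *m A^T) ord0 j = dotp v (row j A).
  by rewrite mxE; apply: eq_bigr => i _; rewrite !mxE.
rewrite -real_normK ?num_real // ler_sqr ?nnegrE ?mulr_ge0 ?enorm_ge0 //.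
exact: normr_dotp_le_enormM.
Qed.

Let unit_ball_image A :=
  [set r | exists v : 'rV[R]_n, enorm v <= 1 /\ r = enorm (v *m A^T)].

Let unit_ball_image_ubound A : has_ubound (unit_ball_image A).
Proof.
have [M M_ge0 AM] := enorm_mulmx_bounded A.
exists M => _ [v [v_le1 ->]].
by apply: le_trans (AM v) _; rewrite ler_piMr.
Qed.

Lemma opnorm_ge0 A : 0 <= opnorm A.
Proof.
apply: (ub_le_sup (unit_ball_image_ubound A)).
by exists 0; rewrite mul0mx enorm0 ler01.
Qed.

Lemma enorm_mulmx_le_opnorm A v : enorm (v *m A^T) <= opnorm A * enorm v.
Proof.
have [->|v0] := eqVneq v 0; first by rewrite mul0mx enorm0 mulr0.
have v_gt0 : 0 < enorm v by rewrite enorm_gt0.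
have := ub_le_sup (unit_ball_image_ubound A)
  (ex_intro _ ((enorm v)^-1 *: v) (conj _ erefl)).
rewrite -scalemxAl !enormZ ger0_norm ?invr_ge0 ?enorm_ge0 // mulVf ?gt_eqF //.
by rewrite ler_pdivrMl // mulrC; apply; rewrite lexx.
Qed.
End OperatorNorm.

Section LineDerivatives.
Variables (R : realType) (n : nat).
Implicit Types (x v D : 'rV[R]_n).

Lemma is_derive_line (W : normedModType R) (h : 'rV[R]_n -> W) x v (t : R) :
  differentiable h (x + t *: v) ->
  is_derive t 1 (fun s : R => h (x + s *: v)) ('d h (x + t *: v) v).
Proof.
move=> dh.
pose l := (cst x : R -> 'rV[R]_n) + (fun s : R => s *: v).
have l_diff : is_diff t l ((0 : R -> 'rV[R]_n) + ( *:%R^~ v)).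
  exact: is_diffD (is_diff_cst x t) (is_diff_scalel t v).
have dhl : differentiable (h \o l) t by apply: differentiable_comp.
apply: DeriveDef; first exact: diff_derivable.
by rewrite deriveE // diff_comp // diff_val /= add0r scale1r.
Qed.

Lemma is_derive_dotpr (V : normedModType R) (G : V -> 'rV[R]_n) D (t v : V) G' :
  is_derive t v G G' -> is_derive t v (fun s => dotp D (G s)) (dotp D G').
Proof.
move=> dG.
have dGi i : is_derive t v (fun s => G s ord0 i) (G' ord0 i).
  have G_der : derivable G t v by [].
  apply: DeriveDef; first by move/derivable_mxP: G_der; apply.
  by move: (@derive_val _ _ _ _ _ _ _ dG); rewrite derive_mx // => <-; rewrite mxE.
have -> : (fun s => dotp D (G s)) = \sum_(i < n) D ord0 i \*: (fun s => G s ord0 i).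
  by apply/funext => s; rewrite fct_sumE.
exact: is_derive_eq (is_derive_sum (fun i => is_deriveZ (D ord0 i) (dGi i))) _.
Qed.
End LineDerivatives.

Lemma MVT01 (R : realType) (phi dphi : R -> R) :
  (forall s : R, is_derive s 1 phi (dphi s)) ->
  exists2 c, 0 < c < 1 & phi 1 - phi 0 = dphi c.
Proof.
move=> phi_der.
have phi_cont : {within `[0, 1], continuous phi}.
  by apply: derivable_within_continuous => s _; have := phi_der s.
have [c c01 ->] := MVT ltr01 (fun s _ => phi_der s) phi_cont.
by exists c; rewrite ?subr0 ?mulr1 // -in_itv.
Qed.

Section MeanValue.
Variables (R : realType) (n : nat).
Implicit Types (x v D : 'rV[R]_n).

Lemma gradient_MVT (f : 'rV[R]_n -> R) g x v : is_gradient f g ->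
  exists2 c, 0 < c < 1 & f (x + v) - f x = dotp (g (x + c *: v)) v.
Proof.
move=> f_grad.
have phi_der (s : R) : is_derive s 1 (fun s => f (x + s *: v)) (dotp (g (x + s *: v)) v).
  have [f_diff df] := f_grad (x + s *: v).
  by rewrite -df; apply: is_derive_line.
by have [c c01] := MVT01 phi_der; rewrite scale1r scale0r addr0; exists c.
Qed.

Lemma hessian_MVT g H x v D : is_hessian g H ->
  exists2 c, 0 < c < 1 &
    dotp D (g (x + v) - g x) = dotp D (v *m (H (x + c *: v))^T).
Proof.
move=> g_hess.
have phi_der (s : R) : is_derive s 1 (fun s => dotp D (g (x + s *: v)))
    (dotp D (v *m (H (x + s *: v))^T)).
  have [g_diff dg] := g_hess (x + s *: v).
  by rewrite -dg; apply/is_derive_dotpr/is_derive_line.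
have [c c01] := MVT01 phi_der; rewrite scale1r scale0r addr0 -dotpBr.
by exists c.
Qed.
End MeanValue.

Lemma le_of_forall_subr_mul_le (R : realFieldType) (a b K : R) : 0 <= K ->
  (forall s, 0 < s <= 1 -> a - K * s <= b) -> a <= b.
Proof.
move=> K_ge0 ab; apply/ler_addgt0Pr => e e_gt0.
have eK_gt0 : 0 < e + K by rewrite ltr_wpDr.
have s_gt0 : 0 < e / (e + K) by rewrite divr_gt0.
have s_le1 : e / (e + K) <= 1 by rewrite ler_pdivrMr // mul1r lerDl.
have Ks_le : K * (e / (e + K)) <= e.
  by rewrite mulrCA ger_pMr // ler_pdivrMr // mul1r lerDr ltW.
have := ab _ (introT andP (conj s_gt0 s_le1)); lra.
Qed.

Lemma strongly_convex_convex (R : realType) (n : nat) mu (f : 'rV[R]_n -> R) :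
  strongly_convex mu f -> forall x y (t : R), 0 <= t <= 1 ->
  f (t *: x + (1 - t) *: y) <= t * f x + (1 - t) * f y.
Proof.
move=> [mu_gt0 f_sc] x y t /andP[t_ge0 t_le1].
apply: le_trans (f_sc x y t t_ge0 t_le1) _; rewrite lerBlDr lerDl.
by apply: mulr_ge0 (sqr_ge0 _); rewrite !mulr_ge0 //; lra.
Qed.

Section SmoothConvex.
Variables (R : realType) (n : nat) (f : 'rV[R]_n -> R) (g : 'rV[R]_n -> 'rV[R]_n).
Variable L : R.
Hypothesis f_grad : is_gradient f g.
Hypothesis g_lipschitz : forall x y, enorm (g x - g y) <= L * enorm (x - y).
Implicit Types (x y v : 'rV[R]_n).

Lemma gradient_taylor_bound x v : 0 <= L ->
  `|f (x + v) - f x - dotp (g x) v| <= L * enorm v ^+ 2.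
Proof.
move=> L_ge0; have [c /andP[c_gt0 c_lt1] ->] := gradient_MVT x v f_grad.
rewrite -dotpBl; apply: le_trans (normr_dotp_le_enormM _ _) _.
have := g_lipschitz (x + c *: v) x.
rewrite addrAC subrr add0r enormZ (ger0_norm (ltW c_gt0)).
move=> /(ler_wpM2r (enorm_ge0 v)) lip; apply: le_trans lip _.
rewrite expr2 mulrA ler_wpM2r ?enorm_ge0 // ler_wpM2l //.
by rewrite ler_piMl ?enorm_ge0 ?(ltW c_lt1).
Qed.

Hypothesis f_convex : forall x y (t : R), 0 <= t <= 1 ->
  f (t *: x + (1 - t) *: y) <= t * f x + (1 - t) * f y.

Lemma convex_gradient_le x v : 0 <= L -> f x + dotp (g x) v <= f (x + v).
Proof.
move=> L_ge0; apply: (le_of_forall_subr_mul_le (mulr_ge0 L_ge0 (sqr_ge0 (enorm v)))).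
move=> s /andP[s_gt0 s_le1].
have := f_convex (x + v) x (introT andP (conj (ltW s_gt0) s_le1)).
have -> : s *: (x + v) + (1 - s) *: x = x + s *: v.
  by apply/matrixP => i j; rewrite !mxE; ring.
have := gradient_taylor_bound x (s *: v) L_ge0.
rewrite ler_norml => /andP[taylor _].
rewrite dotpZr enormZ (ger0_norm (ltW s_gt0)) in taylor.
move=> convex; rewrite -subr_ge0 -(pmulr_rge0 _ s_gt0); nra.
Qed.

Hypothesis L_gt0 : 0 < L.

Lemma convex_gradient_le_sq x y :
  f x + dotp (g x) (y - x) + (4 * L)^-1 * enorm (g y - g x) ^+ 2 <= f y.
Proof.
have L_ge0 := ltW L_gt0.
set d := g y - g x; set k := (2 * L)^-1; set p := y - k *: d.
have := convex_gradient_le x (p - x) L_ge0.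
have := gradient_taylor_bound y (p - y) L_ge0; rewrite ler_norml => /andP[_].
rewrite ![_ + (p - _)]addrC !subrK.
have -> : p - y = - (k *: d) by rewrite /p addrAC subrr add0r.
have -> : p - x = (y - x) - k *: d by rewrite /p addrAC.
rewrite dotpNr dotpZr enormN enormZ exprMn real_normK ?num_real //.
rewrite (dotpBr (g x) (y - x)) dotpZr.
have dd : k * dotp (g y) d - k * dotp (g x) d = k * enorm d ^+ 2.
  by rewrite -mulrBr enorm_sq dotpBl.
have kk : (4 * L)^-1 * enorm d ^+ 2 = k * enorm d ^+ 2 - L * (k ^+ 2 * enorm d ^+ 2).
  by rewrite /k; field; rewrite lt0r_neq0.
lra.
Qed.

(* The constant 1/(2L) instead of the sharp 1/L comes from the non-sharp Taylor bound;
   it is still enough for steps of length 1/L. *)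
Lemma gradient_cocoercive x y :
  (2 * L)^-1 * enorm (g x - g y) ^+ 2 <= dotp (g x - g y) (x - y).
Proof.
have := convex_gradient_le_sq x y; have := convex_gradient_le_sq y x.
rewrite (enorm_distC (g y)) dotpBl !dotpBr.
have -> : (2 * L)^-1 = 2 * (4 * L)^-1 by field; rewrite lt0r_neq0.
lra.
Qed.

Lemma gradient_step_enorm_le x : enorm (g (x - L^-1 *: g x)) <= enorm (g x).
Proof.
set y := x - L^-1 *: g x.
have := gradient_cocoercive x y.
have -> : x - y = L^-1 *: g x by rewrite /y opprB addrC subrK.
have -> : L^-1 = (2 * L)^-1 * 2 by field; rewrite lt0r_neq0.
rewrite dotpZr enormB_sq dotpBl -enorm_sq (dotpC (g y)) -mulrA.
rewrite ler_pM2l ?invr_gt0 ?mulr_gt0 // => cocoercive.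
by rewrite -ler_sqr ?nnegrE ?enorm_ge0 //; lra.
Qed.

Variables (k : nat) (xs : nat -> 'rV[R]_n).
Hypothesis xs_step : forall i, (i < k)%N -> xs i.+1 = xs i - L^-1 *: g (xs i).

Lemma gradient_descent_enorm_le i : (i <= k)%N ->
  enorm (g (xs i)) <= enorm (g (xs 0)).
Proof.
elim: i => [//|i IH] ik.
by rewrite xs_step //; apply: le_trans (gradient_step_enorm_le _) (IH (ltnW ik)).
Qed.

Lemma gradient_descent_dist_le i : (i <= k)%N ->
  enorm (xs i - xs 0) <= i%:R * L^-1 * enorm (g (xs 0)).
Proof.
have Linv_ge0 : 0 <= L^-1 by rewrite invr_ge0; apply: ltW.
elim: i => [_|i IH ik]; first by rewrite subrr enorm0 !mul0r.
rewrite xs_step // addrAC; apply: le_trans (ler_enormD _ _) _.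
rewrite -natr1 !mulrDl mul1r enormN enormZ (ger0_norm Linv_ge0).
exact: lerD (IH (ltnW ik)) (ler_wpM2l Linv_ge0 (gradient_descent_enorm_le (ltnW ik))).
Qed.
End SmoothConvex.

Lemma BC_enorm_sub_le (R : realType) (n k : nat) (C : R) (xs : nat -> 'rV[R]_n) x r :
  (forall i, (i <= k)%N -> enorm (xs i - x) <= r) ->
  forall y, BC k C xs y -> enorm (y - x) <= C * r.
Proof.
move=> xs_near y [c [c_sum1 [c_l1 ->]]].
have r_ge0 : 0 <= r := le_trans (enorm_ge0 _) (xs_near 0%N isT).
have -> : \sum_(i < k.+1) c ord0 i *: xs i - x = \sum_(i < k.+1) c ord0 i *: (xs i - x).
  rewrite -[x in _ - x]scale1r -c_sum1 scaler_suml -sumrB.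
  by apply: eq_bigr => i _; rewrite scalerBr.
apply: le_trans (ler_enorm_sum _ _ _) _.
apply: le_trans (_ : \sum_(i < k.+1) `|c ord0 i| * r <= _); last first.
  by rewrite -mulr_suml ler_wpM2r.
apply: ler_sum => i _; rewrite enormZ; apply: ler_wpM2l => //.
exact: xs_near i (ltn_ord i).
Qed.

Lemma enorm_segment_le (R : realType) (n : nat) (x y z : 'rV[R]_n) (r c : R) :
  0 <= c <= 1 -> enorm (y - x) <= r -> enorm (z - x) <= r ->
  enorm (z + c *: (y - z) - x) <= r.
Proof.
move=> /andP[c_ge0 c_le1] yx zx.
have -> : z + c *: (y - z) - x = c *: (y - x) + (1 - c) *: (z - x).
  by apply/matrixP => i j; rewrite !mxE; ring.
have c'_ge0 : 0 <= 1 - c by rewrite subr_ge0.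
apply: le_trans (ler_enormD _ _) _.
rewrite !enormZ (ger0_norm c_ge0) (ger0_norm c'_ge0).
have := ler_wpM2l c_ge0 yx; have := ler_wpM2l c'_ge0 zx; lra.
Qed.

Lemma le_div_of_mul_sqr_le (R : realFieldType) (a b L : R) :
  0 < L -> 0 <= b -> L * a ^+ 2 <= a * b -> a <= b / L.
Proof.
move=> L_gt0 b_ge0; have [a_gt0|a_le0] := ltrP 0 a; last first.
  by move=> _; apply: le_trans a_le0 (divr_ge0 b_ge0 (ltW L_gt0)).
by rewrite expr2 mulrA [a * b]mulrC ler_pM2r // ler_pdivlMr // mulrC.
Qed.

Lemma xi_lipschitz_near (R : realType) (n : nat) (g : 'rV[R]_n -> 'rV[R]_n)
    (H : 'rV[R]_n -> 'M[R]_n) (L eta r : R) (x0 y z : 'rV[R]_n) :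
  is_hessian g H -> 0 < L -> 0 <= eta ->
  (forall x y, opnorm (H x - H y) <= eta * enorm (x - y)) ->
  enorm (y - x0) <= r -> enorm (z - x0) <= r ->
  enorm (xi L g (H x0) y - xi L g (H x0) z) <= eta * r / L * enorm (y - z).
Proof.
move=> g_hess L_gt0 eta_ge0 H_lip yx0 zx0.
set D := xi L g (H x0) y - xi L g (H x0) z; set d := y - z.
have [c /andP[c_gt0 c_lt1]] := hessian_MVT z d D g_hess.
rewrite (_ : z + d = y) ?/d; last by rewrite addrC subrK.
set w := z + c *: (y - z) => mvt.
have w_near : enorm (w - x0) <= r.
  by apply: enorm_segment_le => //; rewrite (ltW c_gt0) (ltW c_lt1).
have LD : L * enorm D ^+ 2 = dotp D (d *m (H x0 - H w)^T).
  rewrite enorm_sq -dotpZr.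
  have -> : L *: D = d *m (H x0)^T - (g y - g z).
    rewrite /D /xi -scalerBr scalerA mulfV ?gt_eqF // scale1r mulmxBl.
    by rewrite !opprB addrACA [RHS]addrACA [- g y + _]addrC.
  have -> : (H x0 - H w)^T = (H x0)^T - (H w)^T by apply/matrixP => i j; rewrite !mxE.
  by rewrite dotpBr mvt mulmxBr dotpBr.
have r_ge0 : 0 <= r := le_trans (enorm_ge0 _) yx0.
rewrite mulrAC; apply: le_div_of_mul_sqr_le; rewrite ?mulr_ge0 ?enorm_ge0 //.
rewrite LD; apply: le_trans (dotp_le_enormM _ _) (ler_wpM2l (enorm_ge0 _) _).
apply: le_trans (enorm_mulmx_le_opnorm _ _) (ler_wpM2r (enorm_ge0 _) _).
apply: le_trans (H_lip _ _) (ler_wpM2l eta_ge0 _).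
by rewrite enorm_distC.
Qed.

Unset Implicit Arguments.
Theorem lemma4 (R : realType) (n : nat) (f : 'rV[R]_n -> R)
  (g : 'rV[R]_n -> 'rV[R]_n) (H : 'rV[R]_n -> 'M[R]_n)
  (mu L eta C : R) (k : nat) (xs : nat -> 'rV[R]_n) :
  is_gradient f g ->
  is_hessian g H ->
  continuous H ->
  strongly_convex mu f ->
  (forall x y, enorm (g x - g y) <= L * enorm (x - y)) ->
  (forall x y, opnorm (H x - H y) <= eta * enorm (x - y)) ->
  (1 <= k)%N -> 1 <= C ->
  (forall i, (i < k)%N -> xs i.+1 = xs i - L^-1 *: g (xs i)) ->
  forall y z, BC k C xs y -> BC k C xs z ->
    enorm (xi L g (H (xs 0%N)) y - xi L g (H (xs 0%N)) z)
      <= eta / L ^+ 2 * k%:R * C * enorm (g (xs 0%N)) * enorm (y - z).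
Proof.
move=> f_grad g_hess _ f_sc g_lip H_lip _ _ xs_step y z By Bz.
have [n0|n_gt0] := posnP n.
  by subst n; rewrite /enorm !big_ord0 sqrtr0 mulr0.
have L_ge0 : 0 <= L.
  apply: (ge0_of_mul_enorm_ge0 n_gt0) => v.
  by have := g_lip v 0; rewrite subr0; apply: le_trans (enorm_ge0 _).
(* For L = 0 both sides vanish, since 0^-1 = 0. *)
have [L0|L_neq0] := eqVneq L 0.
  by rewrite L0 /xi invr0 !scale0r subrr enorm0 expr0n /= invr0 !(mulr0, mul0r).
have L_gt0 : 0 < L by rewrite lt_def L_neq0.
have eta_ge0 : 0 <= eta.
  apply: (ge0_of_mul_enorm_ge0 n_gt0) => v.
  by have := H_lip v 0; rewrite subr0; apply: le_trans (opnorm_ge0 _).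
set r := k%:R * L^-1 * enorm (g (xs 0%N)).
have xs_near i : (i <= k)%N -> enorm (xs i - xs 0%N) <= r.
  move=> ik; apply: le_trans (gradient_descent_dist_le f_grad g_lip
    (strongly_convex_convex f_sc) L_gt0 xs_step ik) _.
  by rewrite /r -!mulrA ler_wpM2r ?mulr_ge0 ?invr_ge0 ?enorm_ge0 // ler_nat.
have := xi_lipschitz_near g_hess L_gt0 eta_ge0 H_lip
  (BC_enorm_sub_le xs_near By) (BC_enorm_sub_le xs_near Bz).
by congr (_ <= _ * _); rewrite /r; field; rewrite lt0r_neq0.
Qed.
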